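(* For $\tau^1,\tau^2$ both aromas with free edges, or both trees with free edges, $\langle\delta\tau^1,\tau^2\rangle=\langle\tau^1,\overline\delta\tau^2\rangle$. Moreover, for every aroma or tree with free edges $\tau$, $\overline\Phi(\delta\tau)=\partial\,\overline\Phi(\tau)$.
   Context: Fix a finite set $C$ and a field of characteristic zero. A tree (resp. aroma) is a finite connected directed graph with $C$-decorated vertices in which every vertex has exactly one outgoing edge except one root vertex with none (resp. every vertex has exactly one outgoing edge); an aroma contains a unique cycle. A tree or aroma with free edges additionally assigns to each vertex $v$ a number $r_v\ge0$ of free edges (dangling edges ending at $v$); objects are taken up to isomorphism preserving decorations and the $r_v$. $\overline{A_0}$ and $\overline T$ are the spans of aromas and trees with free edges. The symmetry factor $\sigma(\tau)$ is the number of automorphisms preserving decorations and free-edge numbers; the pairing is $\langle\tau,\tau'\rangle=\sigma(\tau)\mathbf 1_{\tau=\tau'}$. For a vertex $v$, $\delta_v$ adds one free edge at $v$ and $\overline\delta_v$ removes one free edge at $v$ (giving $0$ if $r_v=0$); $\delta=\sum_v\delta_v$, $\overline\delta=\sum_v\overline\delta_v$, extended linearly. Let $f(v)$ be the number of (non-free) edges ending at $v$. The extended fertility map is $\overline\Phi(\tau)=\prod_vx^{d(v)}_{f(v)+r_v-1}$, a monomial in variables $x^a_j$ ($a\in C$, $j\ge-1$); for aromas it is regarded in the space $\overline{M_0}$ and for trees in the space $\overline{M_{-1}}$ (formal copies of spans of monomials). $\partial$ is the derivation $\partial x^a_j=x^a_{j+1}$, acting on each of these spaces. *)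

From HB Require Import structures.
From mathcomp Require Import all_boot all_order all_algebra.
From mathcomp Require Import finmap multiset.

Unset Strict Implicit.
Unset Printing Implicit Defensive.
Import GRing.Theory.

Section Graphs.
Variable C : finType.

(* A finite directed graph with C-decorated vertices 'I_n, in which every
   vertex has at most one outgoing edge (v -> w iff fg_succ v = Some w), and
   with fg_r v free edges at each vertex v. *)
Record fe_graph := FGraph {
  fg_n : nat;
  fg_dec : {ffun 'I_fg_n -> C};
  fg_succ : {ffun 'I_fg_n -> option 'I_fg_n};
  fg_r : {ffun 'I_fg_n -> nat}
}.

Definition fg_adj (t : fe_graph) : rel 'I_(fg_n t) :=
  fun u v => (fg_succ t u == Some v) || (fg_succ t v == Some u).
Definition fg_connected (t : fe_graph) :=
  [forall u, forall v, connect (fg_adj t) u v].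

Definition is_tree (t : fe_graph) :=
  fg_connected t && (#|[pred v | fg_succ t v == None]| == 1).
Definition is_aroma (t : fe_graph) :=
  (0 < fg_n t) && fg_connected t && [forall v, fg_succ t v != None].

Definition isomap (t t' : fe_graph) (g : {ffun 'I_(fg_n t) -> 'I_(fg_n t')}) :=
  injectiveb g &&
  [forall v, [&& fg_dec t' (g v) == fg_dec t v,
                 fg_r t' (g v) == fg_r t v &
                 fg_succ t' (g v) == omap g (fg_succ t v)]].

Definition fg_iso (t t' : fe_graph) :=
  (fg_n t == fg_n t') && [exists g, isomap t t' g].

Definition sigma (t : fe_graph) : nat := #|[pred g | isomap t t g]|.

Definition pairing (F : nzRingType) (t t' : fe_graph) : F :=
  if fg_iso t t' then (sigma t)%:R%R else 0%R.

Definition delta_v (t : fe_graph) (v : 'I_(fg_n t)) : fe_graph :=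
  @FGraph (fg_n t) (fg_dec t) (fg_succ t) [ffun w => fg_r t w + (w == v)].
(* deltabar_v : remove one free edge at v (used only when fg_r t v > 0;
   otherwise deltabar_v t = 0 in the vector space) *)
Definition deltabar_v (t : fe_graph) (v : 'I_(fg_n t)) : fe_graph :=
  @FGraph (fg_n t) (fg_dec t) (fg_succ t) [ffun w => fg_r t w - (w == v)].

(* < delta t1, t2 >, extended bilinearly: delta t1 = sum_v delta_v t1 *)
Definition pairing_delta_l (F : nzRingType) (t1 t2 : fe_graph) : F :=
  (\sum_(v : 'I_(fg_n t1)) pairing F (delta_v t1 v) t2)%R.
(* < t1, deltabar t2 >: deltabar t2 = sum_{v, r_v > 0} deltabar_v t2 *)
Definition pairing_deltabar_r (F : nzRingType) (t1 t2 : fe_graph) : F :=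
  (\sum_(v : 'I_(fg_n t2) | (0 < fg_r t2 v)%N) pairing F t1 (deltabar_v t2 v))%R.

Definition fert (t : fe_graph) (v : 'I_(fg_n t)) : nat :=
  #|[pred u | fg_succ t u == Some v]|.

(* Monomials in the variables x^a_j (a in C, j >= -1).  The variable x^a_j is
   encoded as the pair (a, j+1) : C * nat, and a monomial as the multiset of its
   variables (with multiplicity). *)
Definition monomial := (multiset (C * nat)%type).
Definition var_shift (y : C * nat) : C * nat := (y.1, y.2.+1).

Definition poly (F : nzRingType) := monomial -> F.
Definition polyX (F : nzRingType) (m : monomial) : poly F :=
  fun m' => (m' == m)%:R%R.
Definition poly_sum (F : nzRingType) {I : Type} (s : seq I) (p : I -> poly F)
  : poly F := fun m' => (\sum_(i <- s) p i m')%R.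

(* The derivation d with d x^a_j = x^a_{j+1}, on a monomial (Leibniz rule over
   the factors of the monomial, listed with multiplicity). *)
Definition dmono (F : nzRingType) (m : monomial) : poly F :=
  poly_sum F (enum_mset m)
    (fun y => polyX F (msetD (msetn 1 (var_shift y)) (msetB m (msetn 1 y)))).

(* extended fertility monomial prod_v x^{d(v)}_{f(v) + r_v - 1} *)
Definition Phi_mono (t : fe_graph) : monomial :=
  seq_mset [seq (fg_dec t v, fert t v + fg_r t v) | v : 'I_(fg_n t)].
Definition Phibar (F : nzRingType) (t : fe_graph) : poly F := polyX F (Phi_mono t).

Definition Phibar_delta (F : nzRingType) (t : fe_graph) : poly F :=
  poly_sum F (enum (ordinal (fg_n t))) (fun v => Phibar F (delta_v t v)).

End Graphs.
Arguments is_tree {C}.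
Arguments is_aroma {C}.
Arguments pairing_delta_l {C}.
Arguments pairing_deltabar_r {C}.
Arguments Phibar_delta {C}.
Arguments dmono {C}.
Arguments Phi_mono {C}.

From HB Require Import structures.
From mathcomp Require Import all_boot all_order all_algebra.
From mathcomp Require Import finmap multiset.
From Stdlib Require Import FunctionalExtensionality.

(* An isomorphism g from [delta_v t v] onto [u] is the very same vertex map seen as an
   isomorphism from [t] onto [deltabar_v u (g v)], where [u] has a free edge at [g v].  Since
   the number of isomorphisms between isomorphic graphs is the symmetry factor, both sides of
   the adjunction identity count the pairs (v, g), reindexed along w = g v.  For the fertility
   map, [delta_v] raises the index j of the variable x^{d(v)}_j of [v] by one, which is the
   term of the Leibniz rule for the factor of [v].  Neither identity needs [t] to be a tree or
   an aroma, nor the characteristic to be zero. *)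

Set Implicit Arguments.
Unset Strict Implicit.
Unset Printing Implicit Defensive.

Arguments fg_n {C}.
Arguments fg_dec {C}.
Arguments fg_succ {C}.
Arguments fg_r {C}.
Arguments isomap {C}.
Arguments sigma {C}.
Arguments pairing {C}.
Arguments delta_v {C}.
Arguments deltabar_v {C}.
Arguments fert {C}.
Arguments var_shift {C}.

Lemma count_mem_image (T : finType) (U : eqType) (f : T -> U) b :
  count_mem b [seq f x | x : T] = \sum_x (f x == b).
Proof.
rewrite count_map -sum1_count big_mkcond big_enum /=.
by apply: eq_bigr => x _; rewrite eq_sym; case: (_ == _).
Qed.

Section FreeEdgeGraphs.
Variable C : finType.
Implicit Types s t u : fe_graph C.

Lemma isomap_injective t u g : isomap t u g -> injective g.
Proof. by case/andP => /injectiveP. Qed.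

Lemma isomap_comp (t1 t2 t3 : fe_graph C) g h :
  isomap t1 t2 g -> isomap t2 t3 h -> isomap t1 t3 [ffun x => h (g x)].
Proof.
case/andP => /injectiveP ig /forallP Hg; case/andP => /injectiveP ih /forallP Hh.
apply/andP; split.
  by apply/injectiveP => x y; rewrite !ffunE => /ih /ig.
apply/forallP => x; rewrite ffunE.
case/and3P: (Hh (g x)) => /eqP -> /eqP -> /eqP ->.
case/and3P: (Hg x) => /eqP -> /eqP -> /eqP ->.
by rewrite !eqxx; case: (fg_succ t1 x) => //= y; rewrite ffunE.
Qed.

Lemma isomap_bij t u g : fg_n t = fg_n u -> isomap t u g -> bijective g.
Proof.
move=> eq_n /isomap_injective ig.
by apply: (inj_card_bij ig); rewrite !card_ord eq_n.
Qed.

Lemma isomap_sym t u g : fg_n t = fg_n u -> isomap t u g ->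
  exists g', isomap u t g'.
Proof.
move=> eq_n iso_g; have [g' gK g'K] := isomap_bij eq_n iso_g.
exists [ffun y => g' y]; apply/andP; split.
  by apply/injectiveP => x y; rewrite !ffunE; apply: (can_inj g'K).
apply/forallP => y; rewrite ffunE.
case/andP: iso_g => _ /forallP/(_ (g' y)); rewrite g'K.
case/and3P => /eqP <- /eqP <- /eqP ->; rewrite !eqxx.
by case: (fg_succ t (g' y)) => //= z; rewrite ffunE gK.
Qed.

Lemma leq_card_isomap_comp s t u g : isomap t u g ->
  #|[pred h | isomap s t h]| <= #|[pred h | isomap s u h]|.
Proof.
move=> iso_g.
pose post (h : {ffun 'I_(fg_n s) -> 'I_(fg_n t)}) : {ffun _ -> _} := [ffun x => g (h x)].
have post_inj : injective post.
  move=> h1 h2 /ffunP E; apply/ffunP => x.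
  by have := E x; rewrite !ffunE => /(isomap_injective iso_g).
rewrite -(card_imset _ post_inj); apply: subset_leq_card.
by apply/subsetP => _ /imsetP [h iso_h ->]; rewrite inE isomap_comp.
Qed.

Lemma card_isomap t u g : fg_n t = fg_n u -> isomap t u g ->
  #|[pred h | isomap t u h]| = sigma t.
Proof.
move=> eq_n iso_g; have [g' iso_g'] := isomap_sym eq_n iso_g.
apply/eqP; rewrite eqn_leq.
by rewrite (leq_card_isomap_comp _ iso_g) (leq_card_isomap_comp _ iso_g').
Qed.

Lemma pairing_card_isomap (F : nzRingType) t u : fg_n t = fg_n u ->
  pairing F t u = (#|[pred h | isomap t u h]|%:R)%R.
Proof.
rewrite /pairing /fg_iso => eq_n; rewrite {1}eq_n eqxx /=.
case: existsP => [[g iso_g]|no_iso]; first by rewrite (card_isomap eq_n iso_g).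
by rewrite eq_card0 // => h; rewrite inE; apply/negP => iso_h; apply: no_iso; exists h.
Qed.

Lemma pairing_size_neq (F : nzRingType) t u :
  fg_n t != fg_n u -> pairing F t u = 0%R.
Proof. by rewrite /pairing /fg_iso => /negbTE ->. Qed.

Lemma isomap_delta_v t u v (g : {ffun 'I_(fg_n t) -> 'I_(fg_n u)}) :
  isomap (delta_v t v) u g =
  (0 < fg_r u (g v)) && isomap t (deltabar_v u (g v)) g.
Proof.
rewrite /isomap; have [ig|] := boolP (injectiveb g); last by rewrite andbF.
have /injectiveP ginj := ig; rewrite /=.
apply/forallP/andP => [iso_vx|[r_pos /forallP iso_x] x].
  have /and3P [_ /eqP r_v _] := iso_vx v.
  split; first by rewrite r_v ffunE eqxx addn1.
  apply/forallP => x; have /and3P [-> /eqP r_x ->] := iso_vx x.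
  by rewrite !ffunE r_x ffunE (inj_eq ginj) addnK eqxx.
have /and3P [-> /eqP r_x ->] := iso_x x; rewrite andbT /=.
move: r_x; rewrite !ffunE (inj_eq ginj).
by case: eqVneq => [-> <-|_ <-]; rewrite ?addn1 ?subn1 ?prednK ?subn0 ?addn0.
Qed.

Lemma sum_isomap_delta_v (t1 t2 : fe_graph C) (g : {ffun 'I_(fg_n t1) -> 'I_(fg_n t2)}) :
  fg_n t1 = fg_n t2 ->
  \sum_v (isomap (delta_v t1 v) t2 g : nat) =
  \sum_(w | 0 < fg_r t2 w) (isomap t1 (deltabar_v t2 w) g : nat).
Proof.
move=> eq_n; under eq_bigr do rewrite isomap_delta_v.
have [ig|nig] := boolP (injectiveb g); last first.
  by rewrite !big1 // => *; rewrite /isomap (negbTE nig) ?andbF.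
have g_bij : bijective g.
  by apply: (inj_card_bij (injectiveP _ ig)); rewrite !card_ord eq_n.
rewrite (reindex g) /=; last exact: onW_bij.
by rewrite [RHS]big_mkcond; apply: eq_bigr => v _; case: (0 < _).
Qed.

Lemma card_isomapE s t : #|[pred h | isomap s t h]| = \sum_h (isomap s t h : nat).
Proof.
by rewrite -sum1_card big_mkcond; apply: eq_bigr => h _; rewrite inE; case: isomap.
Qed.

Lemma pairing_delta_l_deltabar_r (F : nzRingType) (t1 t2 : fe_graph C) :
  pairing_delta_l F t1 t2 = pairing_deltabar_r F t1 t2.
Proof.
rewrite /pairing_delta_l /pairing_deltabar_r.
have [eq_n|neq_n] := eqVneq (fg_n t1) (fg_n t2); last first.
  by rewrite !big1 // => *; rewrite pairing_size_neq.
under eq_bigr do rewrite pairing_card_isomap // card_isomapE.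
under [RHS]eq_bigr do rewrite pairing_card_isomap // card_isomapE.
rewrite -!GRing.natr_sum /= exchange_big [in RHS]exchange_big /=.
by congr (_%:R)%R; apply: eq_bigr => g _; rewrite sum_isomap_delta_v.
Qed.

Definition vertex_var t v : C * nat := (fg_dec t v, fert t v + fg_r t v).
Arguments vertex_var : clear implicits.

Lemma Phi_mono_delta_v t v :
  Phi_mono (delta_v t v) =
  msetD (msetn 1 (var_shift (vertex_var t v)))
        (msetB (Phi_mono t) (msetn 1 (vertex_var t v))).
Proof.
apply/msetP => b; rewrite mset1DE msetB1E /Phi_mono !mset_seqE !count_mem_image.
rewrite (bigD1 v) // [in RHS](bigD1 v) //= ffunE eqxx addn1 addnS.
rewrite !(eq_sym b) /vertex_var /var_shift addKn /=.
congr (_ + _); apply: (@eq_bigr _ _ _ 'I_(fg_n t)) => w /negbTE w_v.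
by rewrite ffunE w_v addn0.
Qed.

Lemma Phibar_delta_dmono (F : nzRingType) t :
  Phibar_delta F t = dmono F (Phi_mono t).
Proof.
apply: functional_extensionality => m.
rewrite /Phibar_delta /dmono /poly_sum {2}/Phi_mono.
rewrite (perm_big _ (perm_eq_seq_mset _)) /= /image_mem big_map.
by apply: eq_bigr => v _; rewrite /Phibar Phi_mono_delta_v.
Qed.

End FreeEdgeGraphs.

Theorem proposition4p8 (C : finType) (F : fieldType)
  (charF0 : [pchar F]%R =i pred0) :
  (forall t1 t2 : fe_graph C,
     (is_aroma t1 && is_aroma t2) || (is_tree t1 && is_tree t2) ->
     pairing_delta_l F t1 t2 = pairing_deltabar_r F t1 t2) /\
  (forall t : fe_graph C, is_aroma t || is_tree t ->
     Phibar_delta F t = dmono F (Phi_mono t)).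
Proof.
split=> [t1 t2 _|t _]; first exact: pairing_delta_l_deltabar_r.
exact: Phibar_delta_dmono.
Qed.
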